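(* For all integers $m\ge1$ and $j\ge0$, \[b_{\mathcal{G}}(m,m+j,2)=q^{m+\binom{m+1}{2}+\binom j2}{m-1\brack j-1}.\]
   Context: An overpartition is a partition in which the first occurrence of each part size may be overlined, with parts listed in non-increasing order with respect to $1<\bar1<2<\bar2<\cdots$. A part is of size $t$ if it is $t$ or $\bar t$, and $|\pi|$ is the sum of the sizes of the parts. For $m\ge1$, $\mathcal{G}(m)$ is the set of overpartitions $(\pi_1,\dots,\pi_m)$ such that for every $1\le i<m$, if $\pi_{i+1}$ has size $t$ then $\pi_i\in\{\overline{t+1},\,t+2\}$. $b_{\mathcal{G}}(m,j,2)$ is $\sum q^{|\pi|}$ over $\pi\in\mathcal{G}(m)$ whose largest part has size $j$ and whose smallest part is the non-overlined part $2$. The Gaussian binomial is ${M\brack N}=\frac{(q;q)_M}{(q;q)_N(q;q)_{M-N}}$ for $0\le N\le M$ and $0$ otherwise; in particular ${m-1\brack -1}=0$. *)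

From HB Require Import structures.
From mathcomp Require Import all_boot all_order all_algebra fraction.
Set Implicit Arguments. Unset Strict Implicit. Unset Printing Implicit Defensive.
Import GRing.Theory Num.Theory.
Local Open Scope ring_scope.

Notation "x %:F" := (@FracField.tofrac _ x).

(* A part of an overpartition: (size t, overlined?).  (t, true) is \bar t. *)
Definition part := (nat * bool)%type.

Definition part_le (x y : part) : bool :=
  (x.1 < y.1)%N || ((x.1 == y.1) && (x.2 ==> y.2)).

(* An overpartition: positive parts, listed in non-increasing order w.r.t.
   part_le, where only the first occurrence of a size may be overlined
   (equivalently, each overlined part occurs at most once). *)
Definition is_overpartition (s : seq part) : bool :=
  [&& all (fun p => 0 < p.1)%N s,
      sorted (fun x y => part_le y x) s &
      uniq [seq p <- s | p.2]].

Definition opweight (s : seq part) : nat := sumn (map fst s).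

Definition G_rel (x y : part) : bool :=
  (x == (y.1.+1, true)) || (x == (y.1.+2, false)).

Definition inG (m : nat) (s : seq part) : bool :=
  [&& is_overpartition s, size s == m & sorted G_rel s].

Definition largest_size (s : seq part) : nat := \max_(p <- s) p.1.

(* smallest part = last part (parts are listed in non-increasing order) *)
Definition smallest_part (s : seq part) : part := last (0%N, false) s.

Definition of_tuple_part (j : nat) (x : 'I_j.+1 * bool) : part := (val x.1, x.2).

(* b_G(m,j,2) as a polynomial in q = 'X.  Every pi in G(m) whose largest part
   has size j has all part sizes <= j, hence is the image of a unique
   m-tuple of ('I_j.+1 * bool). *)
Definition bG2 (m j : nat) : {poly int} :=
  \sum_(s : m.-tuple ('I_j.+1 * bool) |
         let pi := map (@of_tuple_part j) s in
         [&& inG m pi, largest_size pi == j & smallest_part pi == (2%N, false)])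
    'X^(opweight (map (@of_tuple_part j) s)).

Definition qpoch (M : nat) : {poly int} := \prod_(i < M) (1 - 'X^(i.+1)).

Definition gauss (M N : int) : {fraction {poly int}} :=
  if (0 <= N) && (N <= M) then
    (qpoch `|M|%N)%:F / ((qpoch `|N|%N)%:F * (qpoch `|M - N|%N)%:F)
  else 0.

From HB Require Import structures.
From mathcomp Require Import all_boot all_order all_algebra fraction.
From mathcomp Require Import ring zify.
Import GRing.Theory Num.Theory.
Local Open Scope ring_scope.

(* In an element of G(m) consecutive part sizes drop by 1 (onto
   an overlined part) or by 2 (onto a plain part), so an element whose
   smallest part is the plain 2 is determined by its sequence of m-1 steps:
   it is the [chain] of that step sequence, and its largest part has size
   m+1+#(2-steps).  Hence b_G(m,m+j,2) is the generating function [chain_gf]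
   of step sequences of length m-1 with j-1 steps of size 2 ([bG2_steps]).
   Removing the largest part gives a q-Pascal recurrence for [chain_gf]
   ([chain_gf_rec]), which is solved by q^(...) times the q-binomial
   [qbinom] defined by q-Pascal recursion ([chain_gf_closed]).  Finally
   [qbinom] agrees with the quotient of q-Pochhammer symbols defining
   [gauss] ([gauss_qbinom]). *)

Fixpoint qbinom (n k : nat) : {poly int} :=
  match n, k with
  | _, 0%N => 1
  | 0%N, _.+1 => 0
  | n'.+1, k'.+1 => qbinom n' k' + 'X^(k'.+1) * qbinom n' k'.+1
  end.

Lemma qbinom_gt n k : (n < k)%N -> qbinom n k = 0.
Proof.
elim: n k => [|n IH] [|k] //= ltnk.
by rewrite IH // IH 1?ltnW // mulr0 addr0.
Qed.

Lemma qpoch0 : qpoch 0 = 1.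
Proof. by rewrite /qpoch big_ord0. Qed.

Lemma qpochS k : qpoch k.+1 = qpoch k * (1 - 'X^(k.+1) : {poly int}).
Proof. by rewrite /qpoch big_ord_recr. Qed.

Lemma qbinom_qpoch n k :
  (k <= n)%N -> qbinom n k * (qpoch k * qpoch (n - k)) = qpoch n.
Proof.
elim: n k => [|n IH] [|k] //= le_kn; rewrite ?qpoch0 ?subn0 ?mul1r ?mulr1 //.
rewrite subSS.
have low : qbinom n k * qpoch k.+1 * qpoch (n - k) = qpoch n * (1 - 'X^(k.+1)).
  by rewrite qpochS -(IH k le_kn); ring.
have high : qbinom n k.+1 * qpoch k.+1 * qpoch (n - k) = qpoch n * (1 - 'X^(n - k)).
  have [lt_kn | le_nk] := ltnP k n.
    have nk : (n - k = (n - k.+1).+1)%N by lia.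
    by rewrite nk (qpochS (n - k.+1)) -nk -(IH k.+1 lt_kn); ring.
  have -> : k = n by lia.
  by rewrite qbinom_gt // subnn expr0 subrr !mul0r mulr0.
have Xn : 'X^(n.+1) = 'X^(k.+1) * 'X^(n - k) :> {poly int}.
  by rewrite -exprD; congr ('X^_); lia.
transitivity (qbinom n k * qpoch k.+1 * qpoch (n - k)
              + 'X^(k.+1) * (qbinom n k.+1 * qpoch k.+1 * qpoch (n - k))); first by ring.
by rewrite low high qpochS Xn; ring.
Qed.

(* (q;q)_k takes the value 1 at q = 0, so it can be divided by. *)
Lemma qpoch_neq0 k : qpoch k != 0.
Proof.
apply: contra_neq (@oner_neq0 (int : nzRingType)) => qk0.
have <- : (qpoch k).[0] = 1.
  rewrite /qpoch horner_prod big1 // => i _.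
  by rewrite hornerD hornerN hornerC hornerXn expr0n subr0.
by rewrite qk0 horner0.
Qed.

Lemma gauss_qbinom n k : gauss n%:Z k%:Z = (qbinom n k)%:F.
Proof.
rewrite /gauss lez_nat /=.
have [le_kn | lt_nk] /= := leqP k n; last by rewrite qbinom_gt // rmorph0.
rewrite subzn // !absz_nat -(@qbinom_qpoch n k le_kn) -rmorphM.
by rewrite [X in X / _]rmorphM /= mulfK // tofrac_eq0 mulf_neq0 ?qpoch_neq0.
Qed.

Definition chain_top (ds : seq bool) : nat := (2 + size ds + count id ds)%N.

(* The chain of parts ending in the plain part 2 whose steps, read from the
   largest part down, are [ds]: [true] is a step of 2 landing on a plain part,
   [false] a step of 1 landing on an overlined part. *)
Fixpoint chain (ds : seq bool) : seq part :=
  if ds is b :: ds' then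
    (if b then ((chain_top ds').+2, false) else ((chain_top ds').+1, true))
      :: chain ds'
  else [:: (2%N, false)].

Fixpoint steps (s : seq part) : seq bool :=
  if s is x :: ((y :: _) as s') then (x.1 == y.1.+2) :: steps s' else [::].

Lemma chainE ds : chain ds = head (0%N, false) (chain ds) :: behead (chain ds).
Proof. by case: ds. Qed.

Lemma head_chain ds : (head (0%N, false) (chain ds)).1 = chain_top ds.
Proof. by case: ds => [|[] ds] //=; rewrite /chain_top /=; lia. Qed.

Lemma size_chain ds : size (chain ds) = (size ds).+1.
Proof. by elim: ds => //= b ds ->. Qed.

Lemma last_chain ds x0 : last x0 (chain ds) = (2%N, false).
Proof. by elim: ds x0 => //= b ds IH x0; rewrite IH. Qed.

Lemma weight_chain_cons b ds :
  opweight (chain (b :: ds)) = ((chain_top ds).+1 + b + opweight (chain ds))%N.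
Proof. by rewrite /opweight /=; case: b => /=; lia. Qed.

Lemma sorted_chain ds : sorted G_rel (chain ds).
Proof.
elim: ds => //= b ds IH; rewrite chainE /= in IH *.
by rewrite IH andbT /G_rel -head_chain; case: b; rewrite eqxx ?orbT.
Qed.

Lemma G_rel_lt x y : G_rel x y -> (y.1 < x.1)%N.
Proof. by case/orP => /eqP ->. Qed.

Lemma sorted_chain_lt ds : sorted (fun x y : part => y.1 < x.1)%N (chain ds).
Proof. by apply: sub_sorted (sorted_chain ds) => x y; apply: G_rel_lt. Qed.

Lemma chain_bounds ds : all (fun p : part => 1 < p.1 <= chain_top ds)%N (chain ds).
Proof.
elim: ds => //= b ds IH; apply/andP; split.
  by rewrite /chain_top; case: b => /=; lia.
apply: sub_all IH => p /andP[p_gt1 p_le]; rewrite p_gt1 /=.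
by rewrite /chain_top /= in p_le *; lia.
Qed.

(* Strictly decreasing sizes make a chain an overpartition. *)
Lemma overpartition_chain ds : is_overpartition (chain ds).
Proof.
have ltn_irr : irreflexive (fun x y : part => y.1 < x.1)%N by move=> x /=; rewrite ltnn.
have ltn_tr : transitive (fun x y : part => y.1 < x.1)%N.
  by move=> x y z /= lt_xy lt_zx; apply: ltn_trans lt_xy.
apply/and3P; split.
- by apply: sub_all (chain_bounds ds) => p /andP[/ltnW].
- by apply: sub_sorted (sorted_chain_lt ds) => x y lt_yx; rewrite /part_le lt_yx.
- exact/filter_uniq/(sorted_uniq ltn_tr ltn_irr (sorted_chain_lt ds)).
Qed.

Lemma largest_chain ds : largest_size (chain ds) = chain_top ds.
Proof.
rewrite /largest_size; elim: ds => [|b ds IH]; first by rewrite big_cons big_nil.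
by rewrite [chain _]/= big_cons IH /chain_top /=; case: b => /=; lia.
Qed.

Lemma size_steps s : size (steps s) = (size s).-1.
Proof. by elim: s => [|x [|y s] IH] //=; rewrite IH. Qed.

Lemma chainK : cancel chain steps.
Proof.
elim=> //= b ds IH; rewrite chainE /= in IH *; rewrite IH head_chain.
by case: b => /=; rewrite ?eqxx //; congr (_ :: _); apply/negbTE; lia.
Qed.

Lemma stepsK s : s != [::] -> sorted G_rel s ->
  last (0%N, false) s = (2%N, false) -> chain (steps s) = s.
Proof.
elim: s => [|x [|y s] IH] //= _; first by move=> _ ->.
case/andP=> Gxy Gs last2; have chain_ys := IH isT Gs last2.
have top_ys : chain_top (steps (y :: s)) = y.1 by rewrite -head_chain chain_ys.
rewrite chain_ys top_ys; case/orP: Gxy => /eqP -> /=; last by rewrite eqxx.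
by rewrite eqSS (_ : (y.1 == y.1.+1) = false) //; apply/negbTE; lia.
Qed.

Lemma chain_top_tuple n (d : n.-tuple bool) : chain_top d = (n.+2 + count id d)%N.
Proof. by rewrite /chain_top size_tuple. Qed.

Lemma chain_in_G2 ds :
  inG (size ds).+1 (chain ds) && (smallest_part (chain ds) == (2%N, false)).
Proof.
rewrite /inG overpartition_chain sorted_chain size_chain.
by rewrite /smallest_part last_chain !eqxx.
Qed.

Lemma G2_chain {m : nat} {s : seq part} :
  inG m.+1 s -> smallest_part s = (2%N, false) -> chain (steps s) = s.
Proof.
case/and3P=> _ /eqP size_s Gs last2; apply: stepsK Gs last2.
by apply: contra_eq_neq size_s => ->.
Qed.

(* Parts of size at most N are encoded as elements of 'I_N.+1 * bool, the
   index type of the sum defining [bG2]. *)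
Section TupleEncoding.

Variable N : nat.

Definition encode_part (p : part) : 'I_N.+1 * bool := (inord p.1, p.2).

Lemma of_tuple_partK : cancel (@of_tuple_part N) encode_part.
Proof. by case=> i b; rewrite /encode_part /of_tuple_part /= inord_val. Qed.

Lemma encode_partsK (s : seq part) : all (fun p : part => p.1 <= N)%N s ->
  map (@of_tuple_part N) (map encode_part s) = s.
Proof.
elim: s => //= -[a b] s IH /andP[/= le_aN le_sN].
by rewrite IH // /of_tuple_part /encode_part /= inordK.
Qed.

Lemma size_chain_tuple {n} (d : n.-tuple bool) : size (map encode_part (chain d)) == n.+1.
Proof. by rewrite size_map size_chain size_tuple. Qed.

Definition chain_tuple {n} (d : n.-tuple bool) : n.+1.-tuple ('I_N.+1 * bool) :=
  Tuple (size_chain_tuple d).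

Lemma size_tuple_steps {n} (s : n.+1.-tuple ('I_N.+1 * bool)) :
  size (steps (map (@of_tuple_part N) s)) == n.
Proof. by rewrite size_steps size_map size_tuple. Qed.

Definition tuple_steps {n} (s : n.+1.-tuple ('I_N.+1 * bool)) : n.-tuple bool :=
  Tuple (size_tuple_steps s).

End TupleEncoding.

(* Reindexing [bG2] by step sequences: an element of G(n+1) with smallest
   part 2 and largest part n+1+j is the chain of a step sequence of length n
   with j-1 steps of size 2. *)
Lemma bG2_steps n j : bG2 n.+1 (n.+1 + j) =
  \sum_(d : n.-tuple bool | (count id d).+1 == j) 'X^(opweight (chain d)).
Proof.
set N := (n.+1 + j)%N; rewrite /bG2; set P := (X in \sum_(s | X s) _).
rewrite (reindex_onto (@chain_tuple N n) (@tuple_steps N n)); last first.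
  move=> s; rewrite /P => /and3P[G2 _ /eqP small]; apply: val_inj => /=.
  by rewrite (G2_chain G2 small) -map_comp (eq_map (@of_tuple_partK N)) map_id.
have decoded (d : n.-tuple bool) :
  P (chain_tuple N d) && (tuple_steps N (chain_tuple N d) == d) ->
  map (@of_tuple_part N) (chain_tuple N d) = chain d.
  rewrite /P => /andP[/and3P[G2 _ /eqP small] /eqP /(congr1 val) /= dsteps].
  by rewrite -[LHS](G2_chain G2 small) dsteps.
apply: eq_big => d; last by move/decoded ->.
apply/idP/idP => [Pd | /eqP count_d].
  have /andP[/and3P[_ top _] _] := Pd.
  by move: top; rewrite decoded // largest_chain chain_top_tuple /N; lia.
have dec : map (@of_tuple_part N) (chain_tuple N d) = chain d.
  apply: encode_partsK; apply: sub_all (chain_bounds d) => p /andP[_].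
  by rewrite chain_top_tuple /N -count_d; lia.
have /andP[G2 small] := chain_in_G2 d; rewrite size_tuple in G2.
apply/andP; split; last by apply/eqP/val_inj; rewrite /= dec chainK.
rewrite /P dec G2 small largest_chain chain_top_tuple andbT /=.
by rewrite /N -count_d; lia.
Qed.

Lemma big_tuple_cons (R : Type) (idx : R) (op : Monoid.com_law idx)
    (T : finType) n (P : pred (n.+1.-tuple T)) (F : n.+1.-tuple T -> R) :
  \big[op/idx]_(t | P t) F t =
  \big[op/idx]_(x : T) \big[op/idx]_(t : n.-tuple T | P (cons_tuple x t))
     F (cons_tuple x t).
Proof.
rewrite pair_big_dep (reindex_onto (fun p => cons_tuple p.1 p.2)
  (fun t => (thead t, behead_tuple t))) /=; last by move=> t _; rewrite [RHS]tuple_eta.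
apply: eq_bigl => -[x t] /=; rewrite andbC (_ : _ == _) //.
by apply/eqP; congr (_, _); apply: val_inj.
Qed.

Definition chain_gf (n k : nat) : {poly int} :=
  \sum_(d : n.-tuple bool | count id d == k) 'X^(opweight (chain d)).

(* Removing the largest part: it has size n+3+k' (k' the number of 2-steps
   below it), and the top step is a 2-step or a 1-step. *)
Lemma chain_gf_rec n k : chain_gf n.+1 k =
  'X^(n.+3 + k) * (chain_gf n k + (if k is k'.+1 then chain_gf n k' else 0)).
Proof.
have top_step (b : bool) k' : (b + k' = k)%N ->
    \sum_(t : n.-tuple bool | count id (cons_tuple b t) == k)
      'X^(opweight (chain (cons_tuple b t))) = 'X^(n.+3 + k) * chain_gf n k'.
  move=> bk; rewrite /chain_gf mulr_sumr; apply: eq_big => t.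
    by rewrite /= -bk eqn_add2l.
  rewrite /= -bk eqn_add2l weight_chain_cons -exprD chain_top_tuple => /eqP ->.
  by congr ('X^_); lia.
rewrite [chain_gf n.+1 k]/chain_gf big_tuple_cons big_bool /=.
rewrite (top_step false k) // addrC mulrDr.
case: k top_step => [|k] top_step; last by rewrite (top_step true k).
by rewrite big_pred0 ?mulr0.
Qed.

Lemma chain_gf_closed n k :
  chain_gf n k = 'X^(n.+1 + 'C(n.+2, 2) + 'C(k.+1, 2)) * qbinom n k.
Proof.
elim: n k => [|n IH] k.
  rewrite /chain_gf; case: k => [|k].
    by rewrite (big_pred1 [tuple]) ?mulr1 // => t; rewrite tuple0.
  by rewrite big_pred0 ?mulr0 // => t; rewrite tuple0.
have binS2 m : ('C(m.+1, 2) = m + 'C(m, 2))%N by rewrite binS bin1 addnC.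
rewrite chain_gf_rec; case: k => [|k] /=.
  rewrite addr0 IH mulrA -exprD; congr ('X^_ * _); first by rewrite !binS2; lia.
  by case: (n).
rewrite IH IH [in LHS]addrC !mulrDr !mulrA -!exprD.
by congr (_ + _); congr ('X^_ * _); rewrite !binS2; lia.
Qed.

Theorem mainTheorem18 (m j : nat) : (1 <= m)%N ->
  (bG2 m (m + j))%:F =
    ('X^(m + 'C(m.+1, 2) + 'C(j, 2)) : {poly int})%:F
      * gauss (m%:Z - 1) (j%:Z - 1).
Proof.
case: m => [//|n] _; rewrite bG2_steps.
have predz k : k.+1%:Z - 1 = k%:Z by rewrite -addn1 PoszD addrK.
rewrite predz; case: j => [|k].
  by rewrite big_pred0 // /gauss /= rmorph0 mulr0.
by rewrite predz gauss_qbinom -rmorphM -chain_gf_closed.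
Qed.
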